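(* Suppose $\beta_j\ne0$ for $j=2,\dots,k$ in the Lanczos process, and let $T_k=Y\Theta Y^{\top}$ with $Y=[y_1,\dots,y_k]$ orthogonal and $\Theta=\operatorname{diag}(\vartheta_1,\dots,\vartheta_k)$. Then the optimal value $\mu^{(k)}$ of rLGopt is the smallest root of the secular function $\widehat\chi(\lambda)=\|b_0\|^2e_1^{\top}(T_k-\lambda I)^{-2}e_1-\gamma^2=\sum_{i=1}^k\frac{\zeta_i^2}{(\lambda-\vartheta_i)^2}-\gamma^2$, where $\zeta_i=\|b_0\|e_1^{\top}y_i$. Furthermore, $(\mu^{(k)},x^{(k)})=(\mu^{(k)},-\|b_0\|(T_k-\mu^{(k)}I)^{-1}e_1)$ is a minimizer of rLGopt.
   Context: Let $M\in\mathbb{R}^{n\times n}$ be symmetric (in the paper $M=PAP$) and $0\ne b_0\in\mathbb{R}^n$, $\gamma>0$. Lanczos process: $q_0=0$, $\beta_1=\|b_0\|$, $q_1=b_0/\|b_0\|$, for $j=1,2,\dots$: $\alpha_j=q_j^{\top}Mq_j$, $\widehat q_{j+1}=Mq_j-\alpha_jq_j-\beta_jq_{j-1}$, $\beta_{j+1}=\|\widehat q_{j+1}\|$, $q_{j+1}=\widehat q_{j+1}/\beta_{j+1}$ when $\beta_{j+1}>0$. $T_k$ is the $k\times k$ symmetric tridiagonal matrix with diagonal $\alpha_1,\dots,\alpha_k$ and off-diagonal entries $\beta_2,\dots,\beta_k$. rLGopt: minimize $\lambda$ over $(\lambda,x)\in\mathbb{R}\times\mathbb{R}^k$ with $(T_k-\lambda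 I)x=-\|b_0\|e_1$ and $\|x\|=\gamma$. *)

From HB Require Import structures.
From mathcomp Require Import all_boot all_order all_algebra.
From mathcomp Require Import reals.
Set Implicit Arguments. Unset Strict Implicit. Unset Printing Implicit Defensive.
Import Order.TTheory GRing.Theory Num.Theory.
Local Open Scope ring_scope.

Section Lanczos.
Variables (R : realType) (n : nat).

Definition vnorm m (v : 'cV[R]_m) : R := Num.sqrt (\sum_i (v i 0) ^+ 2).

Definition e1 (m : nat) : 'cV[R]_m := \col_(i < m) (if (i : nat) == 0%N then 1 else 0).

(* One Lanczos step on the state (q_{j-1}, q_j, beta_j), producing
   (q_j, q_{j+1}, beta_{j+1}).  When beta_{j+1} = 0, q_{j+1} is set to 0
   (beta^-1 = 0 in MathComp); this never matters under the hypotheses. *)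
Definition lanczos_step (M : 'M[R]_n) (s : 'cV[R]_n * 'cV[R]_n * R) :=
  let: (qp, q, b) := s in
  let a := (q^T *m M *m q) 0 0 in
  let qh := M *m q - a *: q - b *: qp in
  let b' := vnorm qh in
  (q, b'^-1 *: qh, b').

(* lanczos_state M b0 j = (q_{j-1}, q_j, beta_j) for j >= 1 *)
Definition lanczos_state (M : 'M[R]_n) (b0 : 'cV[R]_n) (j : nat) :=
  iter j.-1 (lanczos_step M) (0, (vnorm b0)^-1 *: b0, vnorm b0).

Definition lanczos_q M b0 j : 'cV[R]_n := (lanczos_state M b0 j).1.2.
Definition lanczos_beta M b0 j : R := (lanczos_state M b0 j).2.
Definition lanczos_alpha M b0 j : R :=
  ((lanczos_q M b0 j)^T *m M *m lanczos_q M b0 j) 0 0.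

(* T_k: diagonal alpha_1..alpha_k, off-diagonal beta_2..beta_k
   (0-based entry (i,i+1) = (i+1,i) = beta_{i+2}) *)
Definition lanczos_T M b0 (k : nat) : 'M[R]_k :=
  \matrix_(i < k, j < k)
    if (i : nat) == j then lanczos_alpha M b0 i.+1
    else if (j : nat) == i.+1 then lanczos_beta M b0 j.+1
    else if (i : nat) == j.+1 then lanczos_beta M b0 i.+1
    else 0.

End Lanczos.

Definition rLG_feasible (R : realType) k (T : 'M[R]_k) (nb0 gamma : R)
  (lam : R) (x : 'cV[R]_k) : Prop :=
  (T - lam%:M) *m x = - (nb0 *: e1 R k) /\ vnorm x = gamma.

Definition secular (R : realType) k (theta : 'rV[R]_k) (zeta : 'I_k -> R)
  (gamma lam : R) : R :=
  \sum_(i < k) (zeta i) ^+ 2 / (lam - theta 0 i) ^+ 2 - gamma ^+ 2.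

(* lam is a root of the secular function (which is only defined off the
   eigenvalues theta_i) *)
Definition secular_root (R : realType) k (theta : 'rV[R]_k) (zeta : 'I_k -> R)
  (gamma lam : R) : Prop :=
  (forall i, lam != theta 0 i) /\ secular theta zeta gamma lam = 0.

(* Diagonalising [T_k = Y Theta Y^T] turns [(T_k - lambda) x = -||b0|| e1] into
   [(theta_i - lambda) (Y^T x)_i = -zeta_i].  As [T_k] is an unreduced tridiagonal
   matrix, none of its eigenvectors has a vanishing first component, so no [zeta_i]
   is zero: a feasible [lambda] lies off the spectrum and then
   [||x||^2 - gamma^2] is the secular function at [lambda].  Hence the feasible
   [lambda] are exactly the roots of the secular function.  Below the smallest
   eigenvalue the secular function increases strictly from [-gamma^2] to [+oo],
   so it has a root there, and that root is the smallest one. *)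

From HB Require Import structures.
From mathcomp Require Import all_boot all_order all_algebra.
From mathcomp Require Import reals ring lra zify.
Set Implicit Arguments. Unset Strict Implicit. Unset Printing Implicit Defensive.
Import Order.TTheory GRing.Theory Num.Theory.
Local Open Scope ring_scope.

Section EuclideanNorm.
Variable R : realType.

Lemma tr_e1_mulmx k m (A : 'M[R]_(k.+1, m)) : (e1 R k.+1)^T *m A = row ord0 A.
Proof.
have -> : e1 R k.+1 = delta_mx ord0 0.
  apply/matrixP => i j; rewrite !mxE (ord1 j) eqxx andbT.
  by rewrite -[_ == 0%N]/(i == ord0); case: (i == ord0).
by rewrite trmx_delta rowE.
Qed.

Lemma vnormE k (v : 'cV[R]_k) : vnorm v = Num.sqrt ((v^T *m v) 0 0).
Proof. by rewrite /vnorm mxE; congr Num.sqrt; apply: eq_bigr => i _; rewrite !mxE. Qed.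

Lemma vnorm_ge0 k (v : 'cV[R]_k) : 0 <= vnorm v.
Proof. exact: sqrtr_ge0. Qed.

Lemma vnorm_sqr k (v : 'cV[R]_k) : vnorm v ^+ 2 = (v^T *m v) 0 0.
Proof.
rewrite vnormE sqr_sqrtr // mxE sumr_ge0 // => i _.
by rewrite !mxE -expr2 sqr_ge0.
Qed.

Lemma vnorm_gt0 k (v : 'cV[R]_k) : v != 0 -> 0 < vnorm v.
Proof.
move=> v_neq0; rewrite /vnorm sqrtr_gt0 lt_def sumr_ge0 ?andbT; last first.
  by move=> i _; rewrite sqr_ge0.
apply: contra v_neq0 => /eqP sum_eq0; apply/eqP/matrixP => i j.
rewrite (ord1 j) mxE; apply/eqP; rewrite -sqrf_eq0; apply/eqP.
by apply: (psumr_eq0P _ sum_eq0) => // l _; rewrite sqr_ge0.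
Qed.

End EuclideanNorm.

Lemma invmx_sqr (R : comUnitRingType) k (A : 'M[R]_k) : A \in unitmx ->
  invmx (A ^+ 2) = invmx A *m invmx A.
Proof.
move=> A_unit; have inv2 : A ^+ 2 *m (invmx A *m invmx A) = 1%:M.
  by rewrite expr2 -mulmxE mulmxA -(mulmxA A A) mulmxV // mulmx1 mulmxV.
by rewrite -[LHS]mulmx1 -inv2 mulKmx // expr2 -mulmxE unitmx_mul A_unit.
Qed.

Section UnreducedHessenberg.
Variables (F : idomainType) (k : nat) (A : 'M[F]_k.+1).
Hypothesis A_band : forall i j : 'I_k.+1, (i.+1 < j)%N -> A i j = 0.
Hypothesis A_superdiag : forall i j : 'I_k.+1, j = i.+1 :> nat -> A i j != 0.

(* Row [i] of [A v = c v] determines [v_(i+1)] from [v_0, ..., v_i]. *)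
Lemma hessenberg_eigenvector_head_neq0 (v : 'cV[F]_k.+1) c :
  A *m v = c *: v -> v != 0 -> v ord0 0 != 0.
Proof.
move=> eig_v; apply: contra_neq => v0_eq0.
suff head_eq0 m (j : 'I_k.+1) : (j <= m)%N -> v j 0 = 0.
  by apply/matrixP => j l; rewrite (ord1 l) mxE (head_eq0 j).
elim: m j => [|m IHm] j le_jm.
  by rewrite (_ : j = ord0) //; apply: val_inj => /=; lia.
have [|lt_mj] := leqP j m; first exact: IHm.
have lt_mk : (m < k.+1)%N by have := ltn_ord j; lia.
pose r := Ordinal lt_mk.
have := congr1 (fun w : 'cV_k.+1 => w r 0) eig_v; rewrite !mxE (IHm r) // mulr0.
have Arj_neq0 : A r j != 0 by apply: A_superdiag => /=; lia.
rewrite (bigD1 j) //= big1 ?addr0 => [/eqP|l ne_lj].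
  by rewrite mulf_eq0 (negPf Arj_neq0) => /eqP.
have [le_lm|lt_ml] := leqP l m; first by rewrite (IHm l) // mulr0.
rewrite A_band ?mul0r //=; move: ne_lj; rewrite -val_eqE /=; lia.
Qed.

End UnreducedHessenberg.

Section SpectralShift.
Variables (R : realType) (k : nat) (Y T : 'M[R]_k) (theta : 'rV[R]_k).
Hypothesis YtY : Y^T *m Y = 1%:M.
Hypothesis T_spectral : T = Y *m diag_mx theta *m Y^T.

Let YYt : Y *m Y^T = 1%:M := mulmx1C YtY.

Lemma vnorm_orthogonal (z : 'cV[R]_k) : vnorm (Y *m z) = vnorm z.
Proof. by rewrite !vnormE trmx_mul mulmxA -(mulmxA z^T) YtY mulmx1. Qed.

Lemma spectral_tr : T^T = T.
Proof. by rewrite T_spectral !trmx_mul trmxK tr_diag_mx mulmxA. Qed.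

Lemma spectral_eigenvector i : T *m col i Y = theta 0 i *: col i Y.
Proof.
have TY : T *m Y = Y *m diag_mx theta by rewrite T_spectral -mulmxA YtY mulmx1.
rewrite [in LHS]colE mulmxA TY -colE mul_mx_diag.
by apply/matrixP => r l; rewrite !mxE mulrC.
Qed.

Lemma spectral_col_neq0 i : col i Y != 0.
Proof.
apply/eqP => coli_eq0; have := congr1 (fun A : 'M_k => A i i) YtY.
rewrite !mxE eqxx big1 => [/eqP|j _]; first by rewrite eq_sym oner_eq0.
have := congr1 (fun v : 'cV_k => v j 0) coli_eq0.
by rewrite !mxE => ->; rewrite mulr0.
Qed.

Lemma spectral_shift l : T - l%:M = Y *m diag_mx (\row_i (theta 0 i - l)) *m Y^T.
Proof.
have -> : diag_mx (\row_i (theta 0 i - l)) = diag_mx theta - l%:M.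
  apply/matrixP => i j; rewrite !mxE.
  by case: eqP => _; rewrite ?mulr1n ?mulr0n ?subr0.
by rewrite mulmxBr mulmxBl mul_mx_scalar -scalemxAl YYt scalemx1 T_spectral.
Qed.

Lemma spectral_shift_unitmx l : (forall i, l != theta 0 i) -> T - l%:M \in unitmx.
Proof.
move=> l_off; pose Dinv := diag_mx (\row_i (theta 0 i - l)^-1).
suff /mulmx1_unit[] : (T - l%:M) *m (Y *m Dinv *m Y^T) = 1%:M by [].
rewrite spectral_shift -!mulmxA (mulmxA Y^T) YtY mul1mx (mulmxA (diag_mx _)).
rewrite mulmx_diag (_ : diag_mx _ = 1%:M) ?mul1mx ?YYt //.
apply/matrixP => i j; rewrite !mxE.
by case: eqP => [->|]; rewrite ?mulr1n ?mulr0n // mulfV // subr_eq0 eq_sym.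
Qed.

Variables (b : 'cV[R]_k) (zeta : 'I_k -> R).
Hypothesis zeta_sqr : forall i, zeta i ^+ 2 = (Y^T *m b) i 0 ^+ 2.

Lemma shifted_system_coord l x : (T - l%:M) *m x = b ->
  forall i, (theta 0 i - l) * (Y^T *m x) i 0 = (Y^T *m b) i 0.
Proof.
move=> <- i; rewrite spectral_shift !mulmxA YtY mul1mx -mulmxA mul_diag_mx.
by rewrite !mxE.
Qed.

Lemma shifted_system_off_spectrum l x : (forall i, zeta i != 0) ->
  (T - l%:M) *m x = b -> forall i, l != theta 0 i.
Proof.
move=> zeta_neq0 sol i; apply: contraTneq (zeta_neq0 i) => l_eq; rewrite negbK.
by rewrite -sqrf_eq0 zeta_sqr -(shifted_system_coord sol) l_eq subrr mul0r sqrf_eq0.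
Qed.

Lemma secular_shifted_system l x gamma : (T - l%:M) *m x = b ->
  (forall i, l != theta 0 i) ->
  secular theta zeta gamma l = vnorm x ^+ 2 - gamma ^+ 2.
Proof.
move=> sol l_off; rewrite /secular; congr (_ - _).
have -> : x = Y *m (Y^T *m x) by rewrite mulmxA YYt mul1mx.
rewrite vnorm_orthogonal vnorm_sqr mxE; apply: eq_bigr => i _.
have -> : (l - theta 0 i) ^+ 2 = (theta 0 i - l) ^+ 2 by rewrite -sqrrN opprB.
have shift_neq0 : (theta 0 i - l) ^+ 2 != 0 by rewrite sqrf_eq0 subr_eq0 eq_sym.
by rewrite zeta_sqr -(shifted_system_coord sol) exprMn mulrC mulKf // !mxE expr2.
Qed.

Lemma secular_resolvent l gamma : (forall i, l != theta 0 i) ->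
  secular theta zeta gamma l =
  (b^T *m invmx ((T - l%:M) ^+ 2) *m b) 0 0 - gamma ^+ 2.
Proof.
move=> l_off; have shift_unit := spectral_shift_unitmx l_off.
rewrite (@secular_shifted_system _ (invmx (T - l%:M) *m b)) ?mulKVmx //.
rewrite vnorm_sqr invmx_sqr // trmx_mul trmx_inv linearB /= tr_scalar_mx.
by rewrite spectral_tr !mulmxA.
Qed.

Lemma shifted_system_secular_root l x gamma : (forall i, zeta i != 0) ->
  (T - l%:M) *m x = b -> vnorm x = gamma -> secular_root theta zeta gamma l.
Proof.
move=> zeta_neq0 sol <-; have l_off := shifted_system_off_spectrum zeta_neq0 sol.
by split=> //; rewrite (secular_shifted_system _ sol l_off) subrr.
Qed.

Lemma secular_root_shifted_system l gamma : 0 <= gamma ->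
  secular_root theta zeta gamma l ->
  (T - l%:M) *m (invmx (T - l%:M) *m b) = b /\
  vnorm (invmx (T - l%:M) *m b) = gamma.
Proof.
move=> gamma_ge0 [l_off root_l].
have sol : (T - l%:M) *m (invmx (T - l%:M) *m b) = b.
  by rewrite mulKVmx ?spectral_shift_unitmx.
split=> //; apply/eqP; rewrite -(@eqrXn2 _ 2) ?vnorm_ge0 // -subr_eq0.
by rewrite -(secular_shifted_system _ sol l_off) root_l.
Qed.

End SpectralShift.

Section SecularFunction.
Variables (R : realType) (k : nat) (theta : 'rV[R]_k.+1) (zeta : 'I_k.+1 -> R).
Variable gamma : R.
Hypothesis gamma_gt0 : 0 < gamma.
Hypothesis zeta_neq0 : forall i, zeta i != 0.

Local Notation f := (secular theta zeta gamma).

Lemma secular_lt_below_spectrum l m :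
  l < m -> (forall i, m < theta 0 i) -> f l < f m.
Proof.
move=> lt_lm m_below; rewrite ltrD2r; apply: ltr_sum => [|i _].
  by apply/hasP; exists ord0; rewrite ?mem_index_enum.
have lt_m_theta := m_below i; have lt_l_theta := lt_trans lt_lm lt_m_theta.
rewrite ltr_pM2l ?ltf_pV2 ?posrE ?exprn_even_gt0 //= ?subr_eq0 ?lt_eqF //; nra.
Qed.

Lemma secular_gt0_below_min : exists2 b, (forall i, b < theta 0 i) & 0 < f b.
Proof.
pose m := [arg min_(i < ord0) theta 0 i]%O.
have theta_min i : theta 0 m <= theta 0 i.
  by rewrite /m; case: arg_minP => // j _; apply.
(* at [theta_m - d] the [m]th term alone is [4 gamma^2] *)
pose d := `|zeta m| / (2 * gamma).
have d_gt0 : 0 < d by rewrite divr_gt0 ?normr_gt0 ?zeta_neq0 ?mulr_gt0.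
exists (theta 0 m - d) => [i|]; first by have := theta_min i; lra.
rewrite /secular (bigD1 m) //=.
have -> : zeta m ^+ 2 / (theta 0 m - d - theta 0 m) ^+ 2 = 4 * gamma ^+ 2.
  rewrite (_ : _ - d - _ = - d); last by ring.
  rewrite sqrrN expr_div_n real_normK ?num_real //.
  by field; rewrite gt_eqF ?zeta_neq0.
have : 0 <= \sum_(i | i != m) zeta i ^+ 2 / (theta 0 m - d - theta 0 i) ^+ 2.
  by apply: sumr_ge0 => i _; rewrite divr_ge0 // sqr_ge0.
have : 0 < gamma ^+ 2 by rewrite exprn_gt0.
lra.
Qed.

Lemma secular_lt0_left b : (forall i, b <= theta 0 i) -> exists2 a, a < b & f a < 0.
Proof.
move=> b_below; pose S := \sum_i zeta i ^+ 2.
have S_ge0 : 0 <= S by apply: sumr_ge0 => i _; rewrite sqr_ge0.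
have gamma2_gt0 : 0 < gamma ^+ 2 by rewrite exprn_gt0.
(* at [b - K] each term is at most [zeta_i^2 / K], and [S / K < gamma^2] *)
pose K := S / gamma ^+ 2 + 1.
have K_ge1 : 1 <= K by rewrite /K lerDr divr_ge0 // ltW.
exists (b - K); first lra.
rewrite /secular subr_lt0; apply: (@le_lt_trans _ _ (S / K)).
  rewrite /S mulr_suml; apply: ler_sum => i _.
  have far : K <= theta 0 i - (b - K) by have := b_below i; lra.
  rewrite ler_wpM2l ?sqr_ge0 // lef_pV2 ?posrE; first nra; last lra.
  by rewrite exprn_even_gt0 //= subr_eq0; apply/eqP; lra.
rewrite ltr_pdivrMr; last lra.
rewrite (_ : gamma ^+ 2 * K = S + gamma ^+ 2); first lra.
by rewrite /K mulrDr mulrCA divff ?mulr1 // gt_eqF.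
Qed.

Definition secular_poly : {poly R} :=
  \sum_i (zeta i ^+ 2)%:P * \prod_(j | j != i) ('X - (theta 0 j)%:P) ^+ 2
  - (gamma ^+ 2)%:P * \prod_j ('X - (theta 0 j)%:P) ^+ 2.

Lemma horner_secular_poly l : (forall i, l != theta 0 i) ->
  secular_poly.[l] = (\prod_j (l - theta 0 j) ^+ 2) * f l.
Proof.
move=> l_off; rewrite /secular_poly /secular !hornerE horner_sum horner_prod.
rewrite mulrBr mulr_sumr mulrC; congr (_ - _); last first.
  by under eq_bigr do rewrite horner_exp hornerXsubC; rewrite mulrC.
apply: eq_bigr => i _; rewrite hornerM hornerC horner_prod.
under eq_bigr do rewrite horner_exp hornerXsubC.
rewrite [in RHS](bigD1 i) //=.
have shift_neq0 : l - theta 0 i != 0 by rewrite subr_eq0.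
by field.
Qed.

Lemma secular_root_below_spectrum :
  exists2 mu, (forall i, mu < theta 0 i) & f mu = 0.
Proof.
have [b b_below fb_gt0] := secular_gt0_below_min.
have [a lt_ab fa_lt0] := secular_lt0_left (fun i => ltW (b_below i)).
have off x : x <= b -> forall i, x != theta 0 i.
  by move=> le_xb i; rewrite lt_eqF // (le_lt_trans le_xb).
have prod_gt0 x : x <= b -> 0 < \prod_j (x - theta 0 j) ^+ 2.
  move=> le_xb; apply: prodr_gt0 => j _.
  by rewrite exprn_even_gt0 //= subr_eq0 off.
have [mu /andP[_ le_mub]] : exists2 mu, a <= mu <= b & root secular_poly mu.
  apply: poly_ivt; first exact: ltW.
  have [a_off b_off] := (off a (ltW lt_ab), off b (lexx b)).
  rewrite !horner_secular_poly //.
  by rewrite !(pmulr_rle0, pmulr_rge0, prod_gt0) ?(ltW lt_ab) ?(ltW fa_lt0) ?(ltW fb_gt0).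
have mu_off := off mu le_mub.
rewrite rootE horner_secular_poly // mulf_eq0 gt_eqF ?prod_gt0 //= => /eqP.
by exists mu => // i; exact: le_lt_trans le_mub (b_below i).
Qed.

Lemma secular_smallest_root : exists mu, secular_root theta zeta gamma mu /\
  forall l, secular_root theta zeta gamma l -> mu <= l.
Proof.
have [mu mu_below f_mu] := secular_root_below_spectrum.
exists mu; split=> [|l [_ f_l]]; first by split=> // i; rewrite lt_eqF.
rewrite leNgt; apply/negP => lt_lmu.
by have := secular_lt_below_spectrum lt_lmu mu_below; rewrite f_l f_mu ltxx.
Qed.

End SecularFunction.

Section LanczosMatrix.
Variables (R : realType) (n : nat) (M : 'M[R]_n) (b0 : 'cV[R]_n).

Lemma lanczos_T_band k (i j : 'I_k) : (i.+1 < j)%N -> lanczos_T M b0 k i j = 0.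
Proof. by move=> lt_i1j; rewrite mxE !ifF //; apply/eqP; lia. Qed.

Lemma lanczos_T_superdiag k (i j : 'I_k) :
  j = i.+1 :> nat -> lanczos_T M b0 k i j = lanczos_beta M b0 j.+1.
Proof. by move=> j_eq; rewrite mxE j_eq (ltn_eqF (ltnSn i)) eqxx. Qed.

Lemma lanczos_eigenvector_head_neq0 k (Y : 'M[R]_k.+1) (theta : 'rV[R]_k.+1) :
  (forall j, (2 <= j <= k.+1)%N -> lanczos_beta M b0 j != 0) ->
  Y^T *m Y = 1%:M -> lanczos_T M b0 k.+1 = Y *m diag_mx theta *m Y^T ->
  forall i, Y ord0 i != 0.
Proof.
move=> beta_neq0 YtY T_spectral i.
have := spectral_eigenvector YtY T_spectral i.
move/hessenberg_eigenvector_head_neq0; rewrite mxE; apply.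
- exact: lanczos_T_band.
- by move=> r j j_eq; rewrite lanczos_T_superdiag // beta_neq0 // ltn_ord j_eq.
- exact: spectral_col_neq0.
Qed.

End LanczosMatrix.

Theorem theorem3p2 (R : realType) (n k : nat) (M : 'M[R]_n) (b0 : 'cV[R]_n)
  (gamma : R) (Y : 'M[R]_k) (theta : 'rV[R]_k) :
  M^T = M -> b0 != 0 -> 0 < gamma -> (0 < k)%N ->
  (forall j, (2 <= j <= k)%N -> lanczos_beta M b0 j != 0) ->
  Y^T *m Y = 1%:M ->
  lanczos_T M b0 k = Y *m diag_mx theta *m Y^T ->
  let T := lanczos_T M b0 k in
  let nb0 := vnorm b0 in
  let zeta := fun i : 'I_k => nb0 * ((e1 R k)^T *m col i Y) 0 0 in
  (* the two expressions of the secular function agree off the spectrum *)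
  (forall lam, (forall i, lam != theta 0 i) ->
     secular theta zeta gamma lam =
     nb0 ^+ 2 * ((e1 R k)^T *m invmx ((T - lam%:M) ^+ 2) *m e1 R k) 0 0
       - gamma ^+ 2) /\
  exists mu : R,
    [/\ (* mu is the optimal value of rLGopt *)
        (exists x, rLG_feasible T nb0 gamma mu x),
        (forall lam x, rLG_feasible T nb0 gamma lam x -> mu <= lam),
        (* mu is the smallest root of the secular function *)
        secular_root theta zeta gamma mu,
        (forall lam, secular_root theta zeta gamma lam -> mu <= lam) &
        (* (mu, -||b0|| (T - mu I)^{-1} e1) is feasible, hence a minimizer *)
        rLG_feasible T nb0 gamma mu (- (nb0 *: (invmx (T - mu%:M) *m e1 R k)))].
Proof.
case: k Y theta => [//|k] Y theta _ b0_neq0 gamma_gt0 _ beta_neq0 YtY T_spectral.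
move=> T nb0 zeta; pose b := - (nb0 *: e1 R k.+1).
have zeta_sqr i : zeta i ^+ 2 = (Y^T *m b) i 0 ^+ 2.
  rewrite /b /zeta mulmxN -scalemxAr -[Y^T *m _]trmxK trmx_mul trmxK.
  by rewrite !tr_e1_mulmx !mxE sqrrN.
have nb0_gt0 : 0 < nb0 := vnorm_gt0 b0_neq0.
have zeta_neq0 i : zeta i != 0.
  rewrite mulf_neq0 ?(gt_eqF nb0_gt0) // tr_e1_mulmx !mxE.
  exact: lanczos_eigenvector_head_neq0 beta_neq0 YtY T_spectral i.
split=> [l l_off|].
  rewrite (secular_resolvent YtY T_spectral zeta_sqr gamma l_off); congr (_ - _).
  rewrite /b -scaleNr [(_ *: _)^T]linearZ /= -!scalemxAl -scalemxAr scalerA mxE.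
  by rewrite -expr2 sqrrN.
have [mu [mu_root mu_min]] := secular_smallest_root theta gamma_gt0 zeta_neq0.
have [mu_sol mu_norm] :=
  secular_root_shifted_system YtY T_spectral zeta_sqr (ltW gamma_gt0) mu_root.
exists mu; have -> : - (nb0 *: (invmx (T - mu%:M) *m e1 R k.+1)) = invmx (T - mu%:M) *m b.
  by rewrite /b mulmxN scalemxAr.
split=> //; first by exists (invmx (T - mu%:M) *m b).
move=> l x [sol norm_x]; apply: mu_min.
exact: (shifted_system_secular_root YtY T_spectral zeta_sqr zeta_neq0 sol norm_x).
Qed.
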